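(* Let $K\colon\mathbb{E}(D)\to\mathbb{E}(D)$ be an affine function and let $u\colon D\to[0,\infty)$ be a prefixed point of $K$, i.e. $K(u)\le u$. If $\mathsf{D}K$ has a $u$-ranking supermartingale, then the restriction $K_{\le u}\colon\mathbb{E}_{\le u}(D)\to\mathbb{E}_{\le u}(D)$ of $K$ has a unique fixed point.
   Context: $\mathbb{E}(D)$ is the set of functions $D\to[0,\infty]$ with pointwise order and operations ($\infty+x=\infty$, $0\cdot\infty=0$, $r\cdot\infty=\infty$ for $r>0$); $\mathbb{E}_{\le u}(D)=\{\eta\mid \eta\le u\}$; $\mathbb{O}$ is the constant zero function; for $x\ge y$ in $[0,\infty]$, $x-y$ is the least $z$ with $x=y+z$. $K$ is affine if $K(\alpha\eta_1+(1-\alpha)\eta_2)=\alpha K(\eta_1)+(1-\alpha)K(\eta_2)$ for all $\eta_1,\eta_2$ and $\alpha\in[0,1]$. $(\mathsf{D}K)(\eta)=K(\eta)-K(\mathbb{O})$. A $u$-ranking supermartingale with respect to $\mathsf{D}K$ is a function $r\colon D\to[0,\infty)$ with $(\mathsf{D}K)(r)+u\le r$. *)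

(* [0,oo] is modelled by the nonnegative elements of \bar R. *)
From mathcomp Require Import all_boot all_order all_algebra.
From mathcomp Require Import all_classical all_reals.
From mathcomp Require Import ereal.
Set Implicit Arguments. Unset Strict Implicit. Unset Printing Implicit Defensive.
Import Order.TTheory GRing.Theory Num.Theory.
Local Open Scope ring_scope.
Local Open Scope ereal_scope.

Definition ext (R : realType) (D : Type) := D -> \bar R.
Definition isE (R : realType) (D : Type) (f : ext R D) : Prop :=
  forall x, 0 <= f x.

Definition ele (R : realType) (D : Type) (f g : ext R D) : Prop :=
  forall x, f x <= g x.

Definition ezero (R : realType) (D : Type) : ext R D := fun _ => 0.

(* x - y in [0,oo]: for x >= y the least z with x = y + z.
   If y = +oo this is 0; otherwise (y finite) it is x - y.
   (Truncated at 0 for x < y, a case that never arises below.) *)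
Definition esubE (R : realType) (x y : \bar R) : \bar R :=
  if y == +oo then 0 else maxe (x - y) 0.

Definition affine (R : realType) (D : Type) (K : ext R D -> ext R D) : Prop :=
  forall (eta1 eta2 : ext R D) (a : R), isE eta1 -> isE eta2 ->
    (0 <= a)%R -> (a <= 1)%R ->
    K (fun x => a%:E * eta1 x + (1 - a)%:E * eta2 x) =
    (fun x => a%:E * K eta1 x + (1 - a)%:E * K eta2 x).

Definition DK (R : realType) (D : Type) (K : ext R D -> ext R D) (eta : ext R D)
  : ext R D := fun x => esubE (K eta x) (K (@ezero R D) x).

Definition ranking_supermartingale (R : realType) (D : Type)
  (K : ext R D -> ext R D) (u r : D -> R) : Prop :=
  (forall x, (0 <= r x)%R) /\
  forall x, DK K (fun y => (r y)%:E) x + (u x)%:E <= (r x)%:E.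

(* Writing p + q, p and q as midpoints of 2p, 2q and 0 shows that an affine K
   satisfies K (p + q) + K 0 = K p + K q; hence, once K 0 is finite, K is
   monotone and DK = K - K 0 is additive.  K 0 <= K u <= u, so K maps the box
   [0, u] of finite functions monotonically into itself, and the pointwise
   infimum of its prefixed points is a fixed point (Knaster-Tarski).  If p <= q
   are fixed points, d = q - p is a fixed point of DK, so DK (n d) = n d for all
   n; induction against the ranking supermartingale r gives n d <= r for every
   n, hence d = 0. *)

From mathcomp Require Import all_boot all_order all_algebra.
From mathcomp Require Import all_classical all_reals.
From mathcomp Require Import ereal.
From mathcomp Require Import lra.
Set Implicit Arguments.
Unset Strict Implicit.
Unset Printing Implicit Defensive.
Import Order.TTheory GRing.Theory Num.Theory.
Local Open Scope ring_scope.
Local Open Scope ereal_scope.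

Local Notation "'nonneg' p" := (forall x, (0 <= p x)%R)
  (at level 10, p at level 8).

Section LeastPrefixedPoint.
Variables (R : realType) (D : Type) (F : (D -> R) -> D -> R) (u : D -> R).
Hypotheses (u_ge0 : nonneg u) (Fu_le : forall x, (F u x <= u x)%R).
Hypothesis F_ge0 : forall (p : D -> R),
  nonneg p -> (forall x, p x <= u x)%R -> nonneg (F p).
Hypothesis F_monotone : forall (p q : D -> R),
  nonneg p -> (forall x, p x <= q x)%R -> (forall x, q x <= u x)%R ->
  forall x, (F p x <= F q x)%R.

Definition prefixed (p : D -> R) : Prop :=
  [/\ nonneg p, forall x, (p x <= u x)%R & forall x, (F p x <= p x)%R].

Definition lfp (x : D) : R := inf [set p x | p in prefixed].

Lemma prefixed_u : prefixed u.
Proof. by split. Qed.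

Lemma lfp_le (p : D -> R) : prefixed p -> forall x, (lfp x <= p x)%R.
Proof.
move=> pp x; apply: ge_inf; last by exists p.
by exists 0%R => _ [q [q0 _ _] <-].
Qed.

Lemma lfp_ge0 : nonneg lfp.
Proof.
move=> x; apply: lb_le_inf; first by exists (u x), u; first exact: prefixed_u.
by move=> _ [q [q0 _ _] <-].
Qed.

Lemma lfp_le_u x : (lfp x <= u x)%R.
Proof. exact: lfp_le prefixed_u x. Qed.

Lemma F_lfp_le x : (F lfp x <= lfp x)%R.
Proof.
apply: lb_le_inf; first by exists (u x), u; first exact: prefixed_u.
move=> _ [p pp <-]; have [p0 pu Fp] := pp.
exact: le_trans (F_monotone lfp_ge0 (lfp_le pp) pu x) (Fp x).
Qed.

Lemma lfp_fixed : F lfp = lfp.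
Proof.
apply: funext => x; apply: le_anti; rewrite F_lfp_le; apply: lfp_le.
have Flfp_u y : (F lfp y <= u y)%R := le_trans (F_lfp_le y) (lfp_le_u y).
split => //; first exact: F_ge0 lfp_ge0 lfp_le_u.
exact: F_monotone (F_ge0 lfp_ge0 lfp_le_u) F_lfp_le lfp_le_u.
Qed.

End LeastPrefixedPoint.

Section AffineOperator.
Variables (R : realType) (D : Type) (K : ext R D -> ext R D).
Hypotheses (K_isE : forall eta, isE eta -> isE (K eta)) (K_affine : affine K).

Local Notation K0 := (K (@ezero R D)).

Lemma K_ge0 (p : D -> R) : nonneg p -> forall x, 0 <= K (EFin \o p) x.
Proof. by move=> p0; apply: K_isE => x; rewrite lee_fin. Qed.

Lemma affine_EFin (p q : D -> R) (a : R) : nonneg p -> nonneg q ->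
  (0 <= a <= 1)%R ->
  K (EFin \o (fun x => a * p x + (1 - a) * q x)%R) =
  (fun x => a%:E * K (EFin \o p) x + (1 - a)%:E * K (EFin \o q) x).
Proof.
move=> p0 q0 /andP[a0 a1].
by rewrite -K_affine // => x; rewrite lee_fin.
Qed.

Lemma K_half (p : D -> R) : nonneg p -> forall x,
  K (EFin \o p) x =
  2^-1%:E * K (EFin \o (fun y => 2 * p y)%R) x + 2^-1%:E * K0 x.
Proof.
move=> p0 x.
have half01 : (0 <= (2^-1 : R) <= 1)%R by apply/andP; split; lra.
rewrite {1}(_ : p = fun y => 2^-1 * (2 * p y) + (1 - 2^-1) * 0)%R; last first.
  by apply: funext => y; lra.
rewrite affine_EFin // => [|y]; last by rewrite mulr_ge0.
by rewrite (_ : 1 - 2^-1 = 2^-1)%R; last lra.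
Qed.

Lemma K_add (p q : D -> R) : nonneg p -> nonneg q -> forall x,
  K (EFin \o (p \+ q)%R) x + K0 x = K (EFin \o p) x + K (EFin \o q) x.
Proof.
move=> p0 q0 x.
have half01 : (0 <= (2^-1 : R) <= 1)%R by apply/andP; split; lra.
rewrite (_ : (p \+ q)%R = fun y => 2^-1 * (2 * p y) + (1 - 2^-1) * (2 * q y))%R.
  rewrite affine_EFin // => [|y|y]; rewrite ?mulr_ge0 //.
  rewrite (K_half p0) (K_half q0) addeACA -ge0_muleDl ?lee_fin ?invr_ge0 //.
  have -> : (1 - 2^-1 = 2^-1 :> R)%R by lra.
  by rewrite -EFinD (_ : 2^-1 + 2^-1 = 1 :> R)%R ?mul1e //; lra.
by apply: funext => y /=; lra.
Qed.

Lemma K0_ge0 x : 0 <= K0 x.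
Proof. by apply: K_isE => y; rewrite /ezero. Qed.

Lemma K0_le (p : D -> R) : nonneg p -> forall x, K0 x <= K (EFin \o p) x.
Proof.
(* K p = r K0 + (1 - r) K (p / (1 - r)) >= r K0 for every r in (0, 1). *)
move=> p0 x; apply/lee_mul01Pr; first exact: K0_ge0.
move=> r /andP[r0 r1].
have r01 : (0 <= r <= 1)%R by rewrite !ltW.
have r1_neq0 : (1 - r != 0)%R by rewrite subr_eq0 gt_eqF.
have q0 : nonneg (fun y => p y / (1 - r))%R.
  by move=> y; rewrite divr_ge0 // subr_ge0 ltW.
rewrite (_ : p = fun y => r * 0 + (1 - r) * (p y / (1 - r)))%R; last first.
  by apply: funext => y; rewrite mulr0 add0r mulrC divfK.
rewrite affine_EFin //; apply: leeDl.
by rewrite mule_ge0 ?K_ge0 // lee_fin subr_ge0 ltW.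
Qed.

Lemma K0_fin_num (p : D -> R) x : nonneg p ->
  K (EFin \o p) x \is a fin_num -> K0 x \is a fin_num.
Proof.
move=> p0; rewrite !ge0_fin_numE ?K_ge0 ?K0_ge0 //.
exact/le_lt_trans/K0_le.
Qed.

Lemma K_monotone (p q : D -> R) x : K0 x \is a fin_num -> nonneg p ->
  (forall y, p y <= q y)%R -> K (EFin \o p) x <= K (EFin \o q) x.
Proof.
move=> K0x p0 pq.
have qp0 : nonneg (q \- p)%R by move=> y; rewrite subr_ge0.
rewrite -(leeD2rE _ _ K0x) (_ : q = p \+ (q \- p))%R; last first.
  by apply: funext => y /=; rewrite addrC subrK.
by rewrite K_add // leeD2l // K0_le.
Qed.

Lemma sub_fixed_DK_fixed (p q : D -> R) x : K0 x \is a fin_num ->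
  nonneg p -> (forall y, p y <= q y)%R ->
  K (EFin \o p) = EFin \o p -> K (EFin \o q) = EFin \o q ->
  K (EFin \o (q \- p)%R) x = K0 x + (q x - p x)%:E.
Proof.
move=> K0x p0 pq Kp Kq.
have qp0 : nonneg (q \- p)%R by move=> y; rewrite subr_ge0.
have := K_add p0 qp0 x.
rewrite (_ : (p \+ (q \- p))%R = q); last first.
  by apply: funext => y /=; rewrite addrC subrK.
rewrite Kp Kq -(fineK K0x) /= => /(congr1 (fun e => e - (p x)%:E)).
rewrite (addeC (p x)%:E) addeK // -EFinD => <-.
by rewrite -EFinD; congr EFin; lra.
Qed.

Lemma rsm_K_le (u r : D -> R) x : ranking_supermartingale K u r ->
  K0 x \is a fin_num -> K (EFin \o r) x + (u x)%:E <= K0 x + (r x)%:E.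
Proof.
move=> [_ rsm] K0x; have /fin_numP[_ /negbTE K0x_fin] := K0x.
have : K (EFin \o r) x - K0 x + (u x)%:E <= (r x)%:E.
  by apply: le_trans (rsm x); rewrite /DK /esubE K0x_fin leeD2r // le_max lexx.
by rewrite (addeC (K0 x)) -leeBlDr // addeAC.
Qed.

Lemma rsm_DK_fixed_eq0 (u r d : D -> R) : (forall x, K0 x \is a fin_num) ->
  ranking_supermartingale K u r -> nonneg d -> (forall x, d x <= u x)%R ->
  (forall x, K (EFin \o d) x = K0 x + (d x)%:E) -> forall x, d x = 0%R.
Proof.
move=> K0fin rsm d0 du Kd.
have nd0 n : nonneg (fun x => n%:R * d x)%R by move=> x; rewrite mulr_ge0.
have ndS n : ((fun x => n%:R * d x) \+ d = fun x => n.+1%:R * d x)%R.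
  by apply: funext => x /=; rewrite -natr1 mulrDl mul1r.
have K_nd n x : K (EFin \o (fun y => n%:R * d y))%R x = K0 x + (n%:R * d x)%:E.
  elim: n x => [|n IH] x.
    rewrite mul0r adde0 (_ : (fun y => 0%:R * d y)%R = fun=> 0%R) //.
    by apply: funext => y; rewrite mul0r.
  have := K_add (nd0 n) d0 x.
  rewrite ndS IH Kd -(fineK (K0fin x)).
  move=> /(congr1 (fun e => e - (fine (K0 x))%:E)).
  by rewrite addeK // -!EFinD => ->; congr EFin; rewrite -natr1; lra.
(* (n + 1) d <= n d + u = DK (n d) + u <= DK r + u <= r *)
have nd_le n x : (n%:R * d x <= r x)%R.
  elim: n x => [|n IH] x; first by rewrite mul0r; case: rsm.
  have := K_monotone (K0fin x) (nd0 n) IH.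
  rewrite K_nd => /(leeD2r (u x)%:E)/le_trans/(_ (rsm_K_le rsm (K0fin x))).
  rewrite -addeA leeD2lE // -EFinD lee_fin => ndu.
  by rewrite -natr1 mulrDl mul1r; apply: le_trans ndu; rewrite lerD2l du.
move=> x; apply/eqP; rewrite eq_le d0 andbT leNgt; apply/negP => dx0.
have := nd_le (Num.bound (r x / d x)) x.
by rewrite leNgt -ltr_pdivrMr // archi_boundP // divr_ge0 ?(ltW dx0) //; case: rsm.
Qed.

Section BelowPrefixedPoint.
Variable u : D -> R.
Hypotheses (u_ge0 : nonneg u) (Ku_le : forall x, K (EFin \o u) x <= (u x)%:E).

Lemma Ku_lt x : K (EFin \o u) x < +oo.
Proof. exact: le_lt_trans (Ku_le x) (ltry _). Qed.

Lemma K0_fin x : K0 x \is a fin_num.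
Proof. by rewrite (K0_fin_num u_ge0) // ge0_fin_numE ?K_ge0 ?Ku_lt. Qed.

Lemma K_fin_num (p : D -> R) : nonneg p -> (forall x, p x <= u x)%R ->
  forall x, K (EFin \o p) x \is a fin_num.
Proof.
move=> p0 pu x; rewrite ge0_fin_numE ?K_ge0 //.
exact: le_lt_trans (K_monotone (K0_fin x) p0 pu) (Ku_lt x).
Qed.

Definition Kfine (p : D -> R) : D -> R := fine \o K (EFin \o p).

Lemma Kfine_EFin (p : D -> R) : nonneg p -> (forall x, p x <= u x)%R ->
  K (EFin \o p) = EFin \o Kfine p.
Proof. by move=> p0 pu; apply: funext => x /=; rewrite fineK // K_fin_num. Qed.

Lemma Kfine_ge0 (p : D -> R) : nonneg p -> (forall x, p x <= u x)%R ->
  nonneg (Kfine p).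
Proof. by move=> p0 pu x; rewrite fine_ge0 // K_ge0. Qed.

Lemma Kfine_monotone (p q : D -> R) : nonneg p -> (forall x, p x <= q x)%R ->
  (forall x, q x <= u x)%R -> forall x, (Kfine p x <= Kfine q x)%R.
Proof.
move=> p0 pq qu x.
have q0 y : (0 <= q y)%R := le_trans (p0 y) (pq y).
have pu y : (p y <= u y)%R := le_trans (pq y) (qu y).
by rewrite fine_le ?K_fin_num // K_monotone ?K_fin_num //
  (K0_fin_num p0) ?K_fin_num.
Qed.

Lemma Kfine_u_le x : (Kfine u x <= u x)%R.
Proof. by have := Ku_le x; rewrite (Kfine_EFin u_ge0). Qed.

Lemma lfp_Kfine_fixedpoint : [/\ nonneg (lfp Kfine u),
  forall x, (lfp Kfine u x <= u x)%R &
  K (EFin \o lfp Kfine u) = EFin \o lfp Kfine u].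
Proof.
have lfp0 := lfp_ge0 u_ge0 Kfine_u_le.
have lfpu := lfp_le_u u_ge0 Kfine_u_le.
split => //; rewrite (Kfine_EFin lfp0 lfpu).
by rewrite (lfp_fixed u_ge0 Kfine_u_le Kfine_ge0 Kfine_monotone).
Qed.

Lemma lfp_Kfine_least (q : D -> R) : nonneg q -> (forall x, q x <= u x)%R ->
  K (EFin \o q) = EFin \o q -> forall x, (lfp Kfine u x <= q x)%R.
Proof. by move=> q0 qu Kq; apply: lfp_le; split => // x; rewrite /Kfine Kq. Qed.

End BelowPrefixedPoint.
End AffineOperator.

Theorem corollary3p7 (R : realType) (D : Type) (K : ext R D -> ext R D)
  (u : D -> R)
  (HKE : forall eta : ext R D, isE eta -> isE (K eta))
  (Haff : affine K)
  (Hu : forall x, (0 <= u x)%R)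
  (Hpre : ele (K (fun x => (u x)%:E)) (fun x => (u x)%:E))
  (Hrsm : exists r : D -> R, ranking_supermartingale K u r) :
  exists! eta : ext R D,
    (isE eta /\ ele eta (fun x => (u x)%:E)) /\ K eta = eta.
Proof.
have [r rsm] := Hrsm.
have K0_fin := K0_fin HKE Haff Hu Hpre.
have [eta0 eta_u Keta] := lfp_Kfine_fixedpoint HKE Haff Hu Hpre.
set eta := lfp (Kfine K) u in eta0 eta_u Keta *.
exists (EFin \o eta); split; first by split => //; split => x; rewrite lee_fin.
move=> e [[e0 eu] Ke].
have e_fin x : e x \is a fin_num.
  by rewrite ge0_fin_numE // (le_lt_trans (eu x)) ?ltry.
have [q e_q] : exists q : D -> R, e = EFin \o q.
  by exists (fine \o e); apply: funext => x /=; rewrite fineK.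
subst e.
have q0 : nonneg q by move=> x; rewrite -lee_fin; exact: e0.
have qu x : (q x <= u x)%R by rewrite -lee_fin; exact: eu.
have eta_q := lfp_Kfine_least q0 qu Ke.
have Kd := fun x => sub_fixed_DK_fixed Haff (K0_fin x) eta0 eta_q Keta Ke.
have d0 x : (0 <= q x - eta x)%R by rewrite subr_ge0.
have du x : (q x - eta x <= u x)%R by rewrite lerBlDr (le_trans (qu x)) ?lerDl.
have d_eq0 := rsm_DK_fixed_eq0 HKE Haff K0_fin rsm d0 du Kd.
by apply: funext => x /=; rewrite (subr0_eq (d_eq0 x)).
Qed.
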